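(* Let $G$ be a finite group, $\Lambda$ an absolutely irreducible $\mathbb Z[G]$-module of finite rank, $W=\Lambda\otimes\mathbb Q$, $w$ a weight of $\Lambda$, $(\,,\,)$ the associated form and $H=\mathrm{Stab}_G(w)$. Then (1) $(w,gw)-(w,w)$ is an integer for all $g\in G$; (2) $(w,gw)\ge (w,w)$ for all $g\in G$, and $(w,gw)>(w,w)$ if $g\in G\setminus H$.
   Context: A weight of $\Lambda$ is $w\in W$ with $gw-w\in\Lambda$ for all $g\in G$. $(\,,\,)$ is the negative definite $G$-invariant symmetric bilinear form on $W$ such that (i) $(w,\lambda)\in\mathbb Z$ for all $\lambda\in\Lambda$, and (ii) every $G$-invariant symmetric bilinear form on $W$ satisfying (i) is an integer multiple of $(\,,\,)$. $H=\{g\in G: gw=w\}$. *)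

From HB Require Import structures.
From mathcomp Require Import all_boot all_order all_algebra all_fingroup all_character.
Set Implicit Arguments. Unset Strict Implicit. Unset Printing Implicit Defensive.
Import Order.TTheory GRing.Theory Num.Theory.
Local Open Scope ring_scope.

(* A Z[G]-module Lambda of finite rank n is modelled as Z^n (integral row
   vectors) inside W = Lambda (x) Q = Q^n, with G acting (on the right) by a
   rational matrix representation rG whose matrices are integral. *)

Definition in_lattice (n : nat) (v : 'rV[rat]_n) : Prop := v \is a mxOver Num.int.

Definition integral_rep (gT : finGroupType) (G : {group gT}) (n : nat)
  (rG : mx_representation rat G n) : Prop :=
  forall g, g \in G -> rG g \is a mxOver Num.int.

Definition is_weight (gT : finGroupType) (G : {group gT}) (n : nat)
  (rG : mx_representation rat G n) (w : 'rV[rat]_n) : Prop :=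
  forall g, g \in G -> in_lattice (w *m rG g - w).

Definition bform (n : nat) (B : 'M[rat]_n) (u v : 'rV[rat]_n) : rat :=
  (u *m B *m v^T) 0 0.

Definition inv_sym_form (gT : finGroupType) (G : {group gT}) (n : nat)
  (rG : mx_representation rat G n) (B : 'M[rat]_n) : Prop :=
  B^T = B /\ forall g, g \in G -> rG g *m B *m (rG g)^T = B.

Definition neg_definite (n : nat) (B : 'M[rat]_n) : Prop :=
  forall v : 'rV[rat]_n, v != 0 -> bform B v v < 0.

Definition weight_integral (gT : finGroupType) (G : {group gT}) (n : nat)
  (rG : mx_representation rat G n) (B : 'M[rat]_n) : Prop :=
  forall w l : 'rV[rat]_n, is_weight rG w -> in_lattice l ->
    bform B w l \is a Num.int.

Definition associated_form (gT : finGroupType) (G : {group gT}) (n : nat)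
  (rG : mx_representation rat G n) (B : 'M[rat]_n) : Prop :=
  [/\ neg_definite B, inv_sym_form rG B, weight_integral rG B &
      forall B' : 'M[rat]_n, inv_sym_form rG B' -> weight_integral rG B' ->
        exists k : int, B' = k%:~R *: B].

From HB Require Import structures.
From mathcomp Require Import all_boot all_order all_algebra all_fingroup all_character.
From mathcomp Require Import ring.
Set Implicit Arguments. Unset Strict Implicit.
Import Order.TTheory GRing.Theory Num.Theory.
Local Open Scope ring_scope.

(* Write u := g w - w.  Then (w, g w) - (w, w) = (w, u) is an integer because w
   is a weight and u lies in Lambda.  Since the form is G-invariant and symmetric,
   (u, u) = 2 ((w, w) - (w, g w)), and negative definiteness gives (u, u) <= 0,
   with strict inequality exactly when g w <> w. *)

Section BilinearForm.

Variables (n : nat) (B : 'M[rat]_n).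

Lemma bformBl u1 u2 v : bform B (u1 - u2) v = bform B u1 v - bform B u2 v.
Proof. by rewrite /bform !mulmxBl [in LHS]mxE [X in _ + X = _]mxE. Qed.

Lemma bformBr u v1 v2 : bform B u (v1 - v2) = bform B u v1 - bform B u v2.
Proof. by rewrite /bform linearB /= mulmxBr [in LHS]mxE [X in _ + X = _]mxE. Qed.

Lemma bformC u v : B^T = B -> bform B u v = bform B v u.
Proof.
move=> symB; have scalar_tr (M : 'M[rat]_1) : M 0 0 = M^T 0 0 by rewrite mxE.
by rewrite /bform scalar_tr !trmx_mul trmxK symB mulmxA.
Qed.

Lemma bform_isometry (M : 'M[rat]_n) u v :
  M *m B *m M^T = B -> bform B (u *m M) (v *m M) = bform B u v.
Proof.
move=> invM; rewrite /bform trmx_mul.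
have -> : u *m M *m B *m (M^T *m v^T) = u *m (M *m B *m M^T) *m v^T.
  by rewrite !mulmxA.
by rewrite invM.
Qed.

Lemma bform_displacement (M : 'M[rat]_n) u :
  B^T = B -> M *m B *m M^T = B ->
  bform B (u *m M - u) (u *m M - u) = 2%:R * (bform B u u - bform B u (u *m M)).
Proof.
move=> symB invM; rewrite !bformBl !bformBr bform_isometry // (bformC (u *m M)) //.
by rewrite mulr_natl mulr2n; ring.
Qed.

Lemma neg_definite_le0 v : neg_definite B -> bform B v v <= 0.
Proof.
move=> negB; have [->|nz_v] := eqVneq v 0; last exact/ltW/negB.
by rewrite /bform !mul0mx mxE.
Qed.

End BilinearForm.

Theorem lemma2p3 (gT : finGroupType) (G : {group gT}) (n : nat)
    (rG : mx_representation rat G n) (B : 'M[rat]_n) (w : 'rV[rat]_n) :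
  integral_rep rG -> mx_absolutely_irreducible rG ->
  is_weight rG w -> associated_form rG B ->
  let H := [set g in G | w *m rG g == w] in
  (forall g, g \in G -> bform B w (w *m rG g) - bform B w w \is a Num.int) /\
  (forall g, g \in G -> bform B w w <= bform B w (w *m rG g)) /\
  (forall g, g \in G :\: H -> bform B w w < bform B w (w *m rG g)).
Proof.
move=> _ _ weight_w [negB [symB invB] intB _] H.
have displacement g : g \in G -> bform B (w *m rG g - w) (w *m rG g - w) =
    2%:R * (bform B w w - bform B w (w *m rG g)).
  by move=> gG; apply: bform_displacement; rewrite ?invB.
split; first by move=> g gG; rewrite -bformBr; apply: intB; [|exact: weight_w].
split=> [g gG | g].
  have := neg_definite_le0 (w *m rG g - w) negB.
  by rewrite displacement // pmulr_rle0 // subr_le0.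
case/setDP=> gG; rewrite inE gG /= => moved.
have nz_u : w *m rG g - w != 0 by rewrite subr_eq0.
by have := negB _ nz_u; rewrite displacement // pmulr_rlt0 // subr_lt0.
Qed.
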